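(* Let $\Omega>0$ denote the maximum absolute value of the stored quantities, let $C,D$ be column indices of $X\in\mathbb{R}^{K\times d}$ to be compared and $E$ a target column index. Then there exists a single transformer layer that simulates the comparison operation $X[:,E]\leftarrow (X[:,C]<X[:,D])$, i.e. it writes into each entry of column $E$ the value $1$ if the corresponding entry of column $C$ is less than that of column $D$, and $0$ otherwise.
   Context: Conventions: rows/columns indexed from $1$; $X[i,j]$ is the $(i,j)$ entry, $X[:,j]$ the $j$-th column. $\phi(x)=\max\{x,0\}$ entrywise. Hardmax $\sigma$: row $i$ of $\sigma(\Phi)$ is $\frac{1}{|S_i|}\sum_{k\in S_i}e_k$, $S_i=\{k:\Phi_{ik}=\max_j\Phi_{ij}\}$. For a weighted hypergraph with incident matrix $A\in\mathbb{R}^{n_v\times n_e}$ ($A_{ij}=w(e_j)$ if vertex $v_i\in e_j$, else $0$) and $K\ge\max\{n_v,n_e\}+1$, the padded incident matrix $\widetilde A\in\mathbb{R}^{K\times K}$ has $\widetilde A_{i+1,j+1}=A_{ij}$, zeros elsewhere. A transformer layer on $X\in\mathbb{R}^{K\times d}$ is $f(X,\widetilde A)=f_{\mathrm{mlp}}(f_{\mathrm{attn}}(X,\widetilde A))$, $f_{\mathrm{attn}}(X,\widetilde A)=\sum_{i\in M_A}\psi^{(i)}(X,\widetilde A)+\sum_{i\in M_{A^\top}}\psi^{(i)}(X,\widetilde A^\top)+\sum_{i\in M}\psi^{(i)}(X,I_K)+X$, $\psi(X,B)=B\,\sigma(XW_QW_K^\top X^\top)XW_V$ ($W_Q,W_K\in\mathbb{R}^{d\times2}$,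 $W_V\in\mathbb{R}^{d\times d}$), $f_{\mathrm{mlp}}(X)=Z^{(4)}W^{(4)}+X$, $Z^{(1)}=X$, $Z^{(j+1)}=\phi(Z^{(j)}W^{(j)})$ ($j=1,2,3$). Storage convention: scalars in the top row of a column (rest $0$), arrays of length $K-1$ in rows $2,\dots,K$ (top $0$); designated columns $B_{\mathrm{global}}$ (top $1$, rest $0$), $B_{\mathrm{local}}$ (top $0$, rest $1$), and scratchpad columns. ''Simulating an operation'' means the layer's weights can be chosen so that applying it to $X$ performs the stated update. *)

From HB Require Import structures.
From mathcomp Require Import all_boot all_order all_algebra.
Set Implicit Arguments. Unset Strict Implicit. Unset Printing Implicit Defensive.
Import Order.TTheory GRing.Theory Num.Theory.
Local Open Scope ring_scope.

Section Transformer.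
Variable R : realFieldType.

Definition relu m n (M : 'M[R]_(m, n)) : 'M[R]_(m, n) := map_mx (fun x => Num.max x 0) M.

Definition argmax_set K (P : 'M[R]_K) (i : 'I_K) : {set 'I_K} :=
  [set k | [forall j, P i j <= P i k]].

Definition hardmax K (P : 'M[R]_K) : 'M[R]_K :=
  \matrix_(i, k) if k \in argmax_set P i then (#|argmax_set P i|%:R)^-1 else 0.

Record head (d : nat) := Head {
  WQ : 'M[R]_(d, 2); WK : 'M[R]_(d, 2); WV : 'M[R]_d }.

Definition psi K d (X : 'M[R]_(K, d)) (B : 'M[R]_K) (h : head d) : 'M[R]_(K, d) :=
  B *m hardmax ((X *m WQ h) *m (X *m WK h)^T) *m X *m WV h.

Record layer (d : nat) := Layer {
  heads_A : seq (head d);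
  heads_AT : seq (head d);
  heads_I : seq (head d);
  h1 : nat; h2 : nat; h3 : nat;
  W1 : 'M[R]_(d, h1); W2 : 'M[R]_(h1, h2); W3 : 'M[R]_(h2, h3); W4 : 'M[R]_(h3, d) }.

Definition f_attn K d (L : layer d) (X : 'M[R]_(K, d)) (At : 'M[R]_K) : 'M[R]_(K, d) :=
  \sum_(h <- heads_A L) psi X At h + \sum_(h <- heads_AT L) psi X At^T h
  + \sum_(h <- heads_I L) psi X 1%:M h + X.

Definition f_mlp K d (L : layer d) (X : 'M[R]_(K, d)) : 'M[R]_(K, d) :=
  let Z2 := relu (X *m W1 L) in
  let Z3 := relu (Z2 *m W2 L) in
  let Z4 := relu (Z3 *m W3 L) in
  Z4 *m W4 L + X.

Definition f_layer K d (L : layer d) (X : 'M[R]_(K, d)) (At : 'M[R]_K) : 'M[R]_(K, d) :=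
  f_mlp L (f_attn L X At).

Definition incident nv ne (edge : 'I_ne -> {set 'I_nv}) (w : 'I_ne -> R) : 'M[R]_(nv, ne) :=
  \matrix_(i, j) if i \in edge j then w j else 0.

(* Padded incident matrix: row/column 0 (the paper's index 1) is zero, and
   entry (i+1, j+1) (0-based) is A i j. *)
Definition pad nv ne K (A : 'M[R]_(nv, ne)) : 'M[R]_K :=
  \matrix_(i, j)
    if (0 < (i : nat))%N && (0 < (j : nat))%N then
      match @insub nat (fun n => n < nv)%N _ (i.-1), @insub nat (fun n => n < ne)%N _ (j.-1) with
      | Some i', Some j' => A i' j'
      | _, _ => 0
      end
    else 0.

(* Storage conventions (0-based row index: row 0 is the paper's "top row"). *)
Definition is_global_col K d (X : 'M[R]_(K, d)) (c : 'I_d) : Prop :=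
  forall i : 'I_K, X i c = (if (i : nat) == 0%N then 1 else 0).
Definition is_local_col K d (X : 'M[R]_(K, d)) (c : 'I_d) : Prop :=
  forall i : 'I_K, X i c = (if (i : nat) == 0%N then 0 else 1).
Definition is_zero_col K d (X : 'M[R]_(K, d)) (c : 'I_d) : Prop :=
  forall i : 'I_K, X i c = 0.

Definition compare_update K d (X : 'M[R]_(K, d)) (C D E : 'I_d) : 'M[R]_(K, d) :=
  \matrix_(i, j) if j == E then (if X i C < X i D then 1 else 0) else X i j.

End Transformer.

From Pilot Require Import Defs.
From HB Require Import structures.
From mathcomp Require Import all_boot all_order all_algebra.
From mathcomp Require Import lra.
Set Implicit Arguments.
Unset Strict Implicit.
Unset Printing Implicit Defensive.

Import Order.TTheory GRing.Theory Num.Theory.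
Local Open Scope ring_scope.

(* The single attention head scores key row k against query row i by X[i,D] if k
   is the top row and by X[i,C] otherwise, so hardmax gives the top row the weight
   a_i = 1, 1/K or 0 according as X[i,C] < X[i,D], X[i,C] = X[i,D] or
   X[i,C] > X[i,D].  The value matrix copies the global column, the indicator of
   the top row, into the scratchpad S, which thus receives a_i.  The MLP turns a_i
   into relu(2 a_i - 1), which is the comparison bit because K >= 2, writes it into
   E while cancelling the residual X[i,E] by relu x - relu (-x) = x, and clears S
   again by subtracting relu a_i = a_i. *)

Section CompareLayer.
Variable R : realFieldType.

Lemma mulmx_delta_mxE m n p (A : 'M[R]_(m, n)) (l : 'I_n) (k : 'I_p) i j :
  (A *m delta_mx l k) i j = A i l *+ (j == k).
Proof.
rewrite mxE (bigD1 l) //= big1 ?addr0 => [|l' /negbTE nl'].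
  by rewrite mxE eqxx /= mulr_natr.
by rewrite mxE nl' mulr0.
Qed.

Lemma col_mul_delta_mx m p (A : 'cV[R]_m) (c k : 'I_p) :
  col c (A *m delta_mx 0 k) = A *+ (c == k).
Proof.
by apply/matrixP => i j; rewrite [LHS]mxE mulmx_delta_mxE mulmxnE [j]ord1.
Qed.

Lemma relu_sub_reluN m n (A : 'M[R]_(m, n)) : relu A - relu (- A) = A.
Proof.
apply/matrixP => i j; rewrite !mxE.
by case: (lerP 0 (A i j)) => hA; [rewrite (max_idPr _) ?subr0 // oppr_le0
  | rewrite (max_idPl _) ?sub0r ?opprK // oppr_ge0 ltW].
Qed.

Lemma relu_id m n (A : 'M[R]_(m, n)) : (forall i j, 0 <= A i j) -> relu A = A.
Proof. by move=> A0; apply/matrixP => i j; rewrite mxE; apply/max_idPl. Qed.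

Lemma relu_idem m n (A : 'M[R]_(m, n)) : relu (relu A) = relu A.
Proof. by apply: relu_id => i j; rewrite mxE le_max lexx orbT. Qed.

Lemma relu_row_mx m n1 n2 (A : 'M[R]_(m, n1)) (B : 'M[R]_(m, n2)) :
  relu (row_mx A B) = row_mx (relu A) (relu B).
Proof. exact: map_row_mx. Qed.

Lemma hardmax_ge0 K (P : 'M[R]_K) i k : 0 <= hardmax P i k.
Proof. by rewrite mxE; case: ifP => // _; rewrite invr_ge0 ler0n. Qed.

Lemma hardmax_two_valued K (P : 'M[R]_K) i k0 x y :
  (1 < K)%N -> (forall k, P i k = if k == k0 then x else y) ->
  hardmax P i k0 = if y < x then 1 else if x == y then K%:R^-1 else 0.
Proof.
move=> K1 Pi; rewrite mxE.
have [k1 k10] : exists k1 : 'I_K, k1 != k0.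
  have [k00|k0n0] := eqVneq (val k0) 0%N.
    by exists (Ordinal K1); rewrite -val_eqE k00.
  by exists (Ordinal (ltnW K1)); rewrite -val_eqE eq_sym.
case: (ltgtP y x) => [yx|xy|yx].
- have -> : argmax_set P i = [set k0].
    apply/setP => k; rewrite !inE; apply/forallP/eqP => [/(_ k0)|-> j].
      by rewrite !Pi eqxx; case: eqP => // _; rewrite leNgt yx.
    by rewrite !Pi eqxx; case: eqP => // _; exact: ltW.
  by rewrite set11 cards1 invr1.
- rewrite ifF //; apply/negP; rewrite inE => /forallP /(_ k1).
  by rewrite !Pi eqxx (negbTE k10) leNgt xy.
- have -> : argmax_set P i = setT.
    by apply/setP => k; rewrite !inE; apply/forallP => j; rewrite !Pi yx !if_same.
  by rewrite in_setT cardsT card_ord.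
Qed.

Lemma hardmax_threshold K (P : 'M[R]_K) i k0 x y :
  (1 < K)%N -> (forall k, P i k = if k == k0 then x else y) ->
  Num.max (2 * hardmax P i k0 - 1) 0 = if y < x then 1 else 0.
Proof.
move=> K1 Pi; rewrite (hardmax_two_valued K1 Pi).
have halfK : 2 * K%:R^-1 <= 1 :> R.
  by rewrite ler_pdivrMr ?ltr0n 1?ltnW // mul1r ler_nat.
by case: (ltgtP y x) => _; rewrite maxEle; case: lerP; lra.
Qed.

Definition attn_scores d K (h : Defs.head R d) (X : 'M[R]_(K, d)) : 'M[R]_K :=
  (X *m WQ h) *m (X *m WK h)^T.

Variables (d : nat) (C D E G L S : 'I_d).

Lemma global_colE K (X : 'M[R]_(K.+1, d)) :
  is_global_col X G -> col G X = delta_mx 0 0.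
Proof.
by move=> XG; apply/matrixP => i j; rewrite !mxE XG [j]ord1 andbT -val_eqE; case: eqP.
Qed.

Lemma zero_colE K (X : 'M[R]_(K, d)) : is_zero_col X S -> col S X = 0.
Proof. by move=> XS; apply/matrixP => i j; rewrite !mxE XS. Qed.

Lemma global_add_local K (X : 'M[R]_(K, d)) i :
  is_global_col X G -> is_local_col X L -> X i G + X i L = 1.
Proof. by move=> XG XL; rewrite XG XL; case: eqP; rewrite ?addr0 ?add0r. Qed.

Definition compare_head : Defs.head R d :=
  Head (row_mx (delta_mx D 0 : 'cV_d) (delta_mx C 0 : 'cV_d))
       (row_mx (delta_mx G 0 : 'cV_d) (delta_mx L 0 : 'cV_d)) (delta_mx G S).

(* Hidden widths are written as sums so that the block lemmas [mul_mx_row] and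
   [mul_row_col] match syntactically. *)
Definition compare_W1 : 'M[R]_(d, 1 + (1 + (1 + 1))) :=
  row_mx (delta_mx S 0)
    (row_mx (2 *: delta_mx S 0 - delta_mx G 0 - delta_mx L 0)
       (row_mx (delta_mx E 0) (- delta_mx E 0))).

Definition compare_W4 : 'M[R]_(1 + (1 + (1 + 1)), d) :=
  col_mx (- delta_mx 0 S)
    (col_mx (delta_mx 0 E) (col_mx (- delta_mx 0 E) (delta_mx 0 E))).

Definition compare_layer : layer R d :=
  @Layer R d [::] [::] [:: compare_head] _ _ _ compare_W1 1%:M 1%:M compare_W4.

Lemma compare_scoresE K (X : 'M[R]_(K, d)) :
  attn_scores compare_head X = col D X *m (col G X)^T + col C X *m (col L X)^T.
Proof. by rewrite -mul_row_col -tr_row_mx !colE -!mul_mx_row. Qed.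

Lemma compare_scores_two_valued K (X : 'M[R]_(K.+1, d)) i k :
  is_global_col X G -> is_local_col X L ->
  attn_scores compare_head X i k = if k == 0 then X i D else X i C.
Proof.
move=> XG XL; rewrite compare_scoresE !mxE !big_ord1 !mxE XG XL -val_eqE /=.
by case: eqP; rewrite ?mulr1 ?mulr0 ?addr0 ?add0r.
Qed.

Lemma compare_attnE K (X : 'M[R]_(K.+1, d)) (At : 'M[R]_K.+1) :
  is_global_col X G ->
  f_attn compare_layer X At
  = col 0 (hardmax (attn_scores compare_head X)) *m delta_mx 0 S + X.
Proof.
move=> XG; rewrite /f_attn /= !big_nil big_seq1 !add0r /psi mul1mx /=.
rewrite -(mul_delta_mx (0 : 'I_1) G S) mulmxA -(mulmxA _ X) -colE global_colE //.
by rewrite -colE.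
Qed.

Lemma compare_mlpE K (Y : 'M[R]_(K, d)) :
  f_mlp compare_layer Y
  = - relu (col S Y) *m delta_mx 0 S
    + (relu (2 *: col S Y - col G Y - col L Y) - col E Y) *m delta_mx 0 E + Y.
Proof.
rewrite /f_mlp /= !mulmx1 !relu_idem.
rewrite /compare_W1 !mul_mx_row !mulmxBr !mulmxN -scalemxAr -!colE !relu_row_mx.
rewrite /compare_W4 !mul_row_col.
rewrite -[in RHS](relu_sub_reluN (col E Y)).
by rewrite !mulmxN mulNmx !mulmxBl opprB [in RHS](addrC (relu (- _) *m _)).
Qed.

Lemma compare_layer_correct K (X : 'M[R]_(K.+2, d)) (At : 'M[R]_K.+2) :
  G != S -> L != S -> E != S ->
  is_global_col X G -> is_local_col X L -> is_zero_col X S ->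
  f_layer compare_layer X At = compare_update X C D E.
Proof.
move=> nGS nLS nES XG XL XS.
rewrite /f_layer compare_attnE // compare_mlpE.
set H := hardmax _.
have H_ge0 i k : 0 <= H i k by exact: hardmax_ge0.
have H_step i : Num.max (2 * H i 0 - 1) 0 = if X i C < X i D then 1 else 0.
  by apply: hardmax_threshold => // k; apply: compare_scores_two_valued.
clearbody H.
have colY c : col c (col 0 H *m delta_mx 0 S + X) = col 0 H *+ (c == S) + col c X.
  by rewrite linearD /= col_mul_delta_mx.
rewrite !colY eqxx (negbTE nGS) (negbTE nLS) (negbTE nES) (zero_colE XS) addr0.
rewrite !mulr0n !add0r mulr1n relu_id; last by move=> i j; rewrite mxE.
rewrite mulNmx (addrC (- _)) addrA subrK.
apply/matrixP => i j; rewrite [LHS]mxE mulmx_delta_mxE !mxE.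
case: eqP => [->|_]; last by rewrite mulr0n add0r.
by rewrite mulr1n -addrA -opprD global_add_local // H_step subrK.
Qed.

End CompareLayer.

Theorem lemmaC3 (R : realFieldType) (K d : nat) (Omega : R) (C D E G L S : 'I_d) :
  (1 < K)%N -> 0 < Omega ->
  (* G = B_global, L = B_local, S = a scratchpad column *)
  uniq [:: G; L; S] -> E \notin [:: G; L; S] -> C != S -> D != S ->
  exists Ly : layer R d,
    forall (nv ne : nat) (edge : 'I_ne -> {set 'I_nv}) (w : 'I_ne -> R)
           (X : 'M[R]_(K, d)),
      (maxn nv ne < K)%N ->
      (forall i j, `|X i j| <= Omega) ->
      is_global_col X G -> is_local_col X L -> is_zero_col X S ->
      f_layer Ly X (pad K (incident edge w)) = compare_update X C D E.
Proof.
case: K => [|[|K]] // _ _ uniqGLS freshE _ _.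
exists (compare_layer R C D E G L S) => nv ne edge w X _ _.
move: uniqGLS freshE; rewrite /= !inE !negb_or.
move=> /andP[/andP[_ nGS] /andP[nLS _]] /and3P[_ _ nES].
exact: compare_layer_correct.
Qed.
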